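(* Let $I\subset S=K[x_1,\dots,x_t]$ be an $\mathfrak m$-primary monomial ideal. Then there exists $s_0$ such that $v(I^{s+1})\ge v(I)$ for all $s\ge s_0$.
   Context: $K$ is a field, $S$ is standard graded and $\mathfrak m=\langle x_1,\dots,x_t\rangle$. For a proper graded ideal $I$, the $v$-number is $v(I)=\min\{k\ge 0 : \exists f\in S_k,\ \mathcal P\in\operatorname{Ass}(S/I) \text{ with } (I:f)=\mathcal P\}$. *)

From HB Require Import structures.
From mathcomp Require Import all_boot all_algebra.
From mathcomp Require Import mpoly.
From Stdlib Require Import ClassicalEpsilon.
Set Implicit Arguments. Unset Strict Implicit. Unset Printing Implicit Defensive.
Import GRing.Theory.
Local Open Scope ring_scope.

Section Ideals.
Variables (K : fieldType) (t : nat).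
Local Notation S := {mpoly K[t]}.

Definition ideal_of := S -> Prop.

Definition is_ideal (J : ideal_of) : Prop :=
  [/\ J 0, (forall f g, J f -> J g -> J (f + g)) & (forall r f, J f -> J (r * f))].

Definition gen_ideal (G : ideal_of) : ideal_of :=
  fun f => forall J, is_ideal J -> (forall g, G g -> J g) -> J f.

Definition max_ideal : ideal_of := gen_ideal (fun f => exists i : 'I_t, f = 'X_i).

Definition is_monomial (f : S) : Prop := exists m : 'X_{1..t}, f = 'X_[m].

Definition monomial_ideal (I : ideal_of) : Prop :=
  exists G : ideal_of, (forall g, G g -> is_monomial g) /\
                       (forall f, I f <-> gen_ideal G f).

Definition radical (I : ideal_of) : ideal_of := fun f => exists n : nat, I (f ^+ n).

Definition m_primary (I : ideal_of) : Prop :=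
  is_ideal I /\ forall f, radical I f <-> max_ideal f.

Definition prod_ideal (I J : ideal_of) : ideal_of :=
  gen_ideal (fun h => exists f g, [/\ I f, J g & h = f * g]).

Fixpoint pow_ideal (I : ideal_of) (s : nat) : ideal_of :=
  match s with
  | 0 => fun _ => True
  | s'.+1 => prod_ideal (pow_ideal I s') I
  end.

Definition colon (I : ideal_of) (f : S) : ideal_of := fun g => I (g * f).

Definition is_prime_ideal (P : ideal_of) : Prop :=
  [/\ is_ideal P, ~ P 1 & forall f g, P (f * g) -> P f \/ P g].

Definition associated_prime (I P : ideal_of) : Prop :=
  is_prime_ideal P /\ exists f : S, forall g, colon I f g <-> P g.

Definition vnum_set (I : ideal_of) (k : nat) : Prop :=
  exists (f : S) (P : ideal_of),
    [/\ f \is k.-homog, associated_prime I P & forall g, colon I f g <-> P g].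

Definition vnum_pred (I : ideal_of) : pred nat :=
  fun k => if excluded_middle_informative (vnum_set I k) then true else false.

(* v(I) = min { k : ... }  (defaults to 0 if the set is empty, which does
   not happen for proper graded ideals) *)
Definition vnumber (I : ideal_of) : nat :=
  match excluded_middle_informative (exists k, vnum_pred I k) with
  | left H => ex_minn H
  | right _ => 0%N
  end.

End Ideals.

(* Pick a socle monomial x^a of I: x^a is not in I but x_i x^a is, for every i.
   It exists because I contains a pure power of every variable and no unit, and
   (I : x^a) = m, so v(I) <= deg x^a.  Conversely, if (J : f) = P is prime with f
   a form of degree k, then P contains J, hence every x_i, so x_i f is a nonzero
   form of degree k + 1 in J.  As I^(s+1) lies in m^(s+1), this forces k >= s,
   whence v(I^(s+1)) >= s >= deg x^a >= v(I) for s >= deg x^a. *)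

From mathcomp Require Import all_boot all_algebra.
From mathcomp Require Import mpoly.
From Stdlib Require Import Classical ClassicalEpsilon.
From mathcomp Require Import zify.
Set Implicit Arguments. Unset Strict Implicit. Unset Printing Implicit Defensive.
Import GRing.Theory.
Local Open Scope ring_scope.

Section Ideals.
Variables (K : fieldType) (t : nat).
Local Notation S := {mpoly K[t]}.
Implicit Types (I J P G : ideal_of K t) (f g r : S).

Lemma gen_ideal_is_ideal G : is_ideal (gen_ideal G).
Proof.
split=> [J [] // | f g Gf Gg J HJ GJ | r f Gf J HJ GJ]; case: (HJ) => _ HD HM.
- exact: HD (Gf J HJ GJ) (Gg J HJ GJ).
- exact: HM (Gf J HJ GJ).
Qed.

Lemma sub_gen_ideal G g : G g -> gen_ideal G g.
Proof. by move=> Gg J _; apply. Qed.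

Lemma gen_ideal_least G J : is_ideal J -> (forall g, G g -> J g) ->
  forall f, gen_ideal G f -> J f.
Proof. by move=> HJ GJ f; apply. Qed.

Section IdealClosure.
Variables (J : ideal_of K t) (HJ : is_ideal J).

Lemma idealMl r f : J f -> J (r * f).
Proof. by case: HJ => _ _; apply. Qed.

Lemma idealMr r f : J f -> J (f * r).
Proof. by move=> Jf; rewrite mulrC; apply: idealMl. Qed.

Lemma idealD f g : J f -> J g -> J (f + g).
Proof. by case: HJ => _ + _; apply. Qed.

Lemma idealB f g : J f -> J g -> J (f - g).
Proof. by move=> Jf Jg; apply: idealD => //; rewrite -mulN1r; apply: idealMl. Qed.

Lemma idealZ c f : J f -> J (c *: f).
Proof. by move=> Jf; rewrite -mul_mpolyC; apply: idealMl. Qed.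

Lemma colon_is_ideal f : is_ideal (colon J f).
Proof.
rewrite /colon; split=> [|g h Jg Jh|r g Jg].
- by rewrite mul0r; case: HJ.
- by rewrite mulrDl; apply: idealD.
- by rewrite -mulrA; apply: idealMl.
Qed.

End IdealClosure.

Lemma prime_ideal_pow P f k : is_prime_ideal P -> P (f ^+ k) -> P f.
Proof.
case=> _ P1 Pprime; elim: k => [|k IHk]; first by rewrite expr0.
by rewrite exprS => /Pprime [| /IHk].
Qed.

Lemma max_idealE f : max_ideal f <-> f@_0 = 0.
Proof.
have Hmax := gen_ideal_is_ideal (fun f : S => exists i : 'I_t, f = 'X_i).
split=> [|f0].
- apply: (gen_ideal_least (J := fun f => f@_0 = 0)) => [|_ [i ->]].
    split=> [|p q p0 q0|r q q0]; first exact: mcoeff0.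
      by rewrite mcoeffD p0 q0 addr0.
    by rewrite rmorphM /= q0 mulr0.
  by rewrite mcoeffX mnm1_eq0.
- rewrite (mpolyE f) big_seq; apply: (big_ind (@max_ideal K t)).
  + by case: Hmax.
  + exact: idealD.
  move=> m msupp_m; apply: (idealZ Hmax).
  have [i mi] : exists i, m i != 0%N.
    apply/existsP; apply: contraTT msupp_m => /existsPn m0.
    have -> : m = 0%MM by apply/mnmP => i; rewrite mnm0E; apply/eqP/negPn.
    by rewrite mcoeff_msupp f0 eqxx.
  rewrite -(submK (m := U_(i)%MM) (m' := m)) ?lep1mP // mpolyXD.
  by apply: (idealMl Hmax); apply: sub_gen_ideal; exists i.
Qed.

Lemma max_ideal_prime : is_prime_ideal (@max_ideal K t).
Proof.
split; first exact: gen_ideal_is_ideal.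
- by move/max_idealE/eqP; rewrite mcoeff1 eqxx oner_eq0.
- move=> f g /max_idealE /eqP; rewrite rmorphM mulf_eq0 /=.
  by case/orP => /eqP /max_idealE; [left | right].
Qed.

(* [deg_geq n] is m^n. *)
Definition deg_geq (n : nat) : ideal_of K t :=
  fun f => forall m, m \in msupp f -> (n <= mdeg m)%N.

Lemma deg_geqM a b f g : deg_geq a f -> deg_geq b g -> deg_geq (a + b) (f * g).
Proof.
move=> Hf Hg _ /msuppM_le /allpairsP [[m1 m2] /= [m1f m2g ->]].
by rewrite mdegD leq_add ?Hf ?Hg.
Qed.

Lemma deg_geq_is_ideal n : is_ideal (deg_geq n).
Proof.
split=> [m | f g Hf Hg m /msuppD_le | r f Hf]; first by rewrite msupp0.
  by rewrite mem_cat => /orP [/Hf | /Hg].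
by rewrite -[n]add0n; apply: deg_geqM => // m _.
Qed.

Lemma deg_geq_proper J n : (forall f, J f -> deg_geq n.+1 f) -> ~ J 1.
Proof.
by move=> Jdeg /Jdeg /(_ 0%MM); rewrite msupp1 mem_seq1 eqxx mdeg0 => /(_ isT).
Qed.

Section MPrimary.
Variables (I : ideal_of K t) (Iprim : m_primary I).

Lemma m_primary_pure_powers : exists e : 'I_t -> nat, forall i, I ('X_i ^+ e i).
Proof.
have pure_power i : exists e, I ('X_i ^+ e).
  by apply/Iprim.2; apply: sub_gen_ideal; exists i.
exact: fin_all_exists pure_power.
Qed.

Lemma m_primary_deg_geq1 f : I f -> deg_geq 1 f.
Proof.
move=> If m msupp_m; rewrite lt0n mdeg_eq0; apply: contraTneq msupp_m => ->.
rewrite mcoeff_msupp negbK; apply/eqP/max_idealE/Iprim.2.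
by exists 1%N; rewrite expr1.
Qed.

End MPrimary.

Lemma pow_ideal_is_ideal I n : is_ideal I -> is_ideal (pow_ideal I n).
Proof. by case: n => [|n] HI; [split | apply: gen_ideal_is_ideal]. Qed.

Lemma pow_ideal_deg_geq I : (forall f, I f -> deg_geq 1 f) ->
  forall n f, pow_ideal I n f -> deg_geq n f.
Proof.
move=> Ideg; elim=> [f _ m _ // | n IHn].
apply: gen_ideal_least; first exact: deg_geq_is_ideal.
move=> _ [f [g [If Ig ->]]]; rewrite -addn1.
by apply: deg_geqM; [apply: IHn | apply: Ideg].
Qed.

Lemma pow_ideal_pure_powers I (e : 'I_t -> nat) : (forall i, I ('X_i ^+ e i)) ->
  forall n i, pow_ideal I n ('X_i ^+ (e i * n)).
Proof.
move=> Ie; elim=> [// | n IHn] i; apply: sub_gen_ideal.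
exists ('X_i ^+ (e i * n)), ('X_i ^+ e i).
by rewrite mulnSr exprD; split; [apply: IHn | apply: Ie |].
Qed.

Definition socle_monomial J (m : 'X_{1..t}) : Prop :=
  ~ J 'X_[m] /\ forall i, J ('X_i * 'X_[m]).

Lemma mdeg_le_notin J (e : 'I_t -> nat) m : is_ideal J ->
  (forall i, J ('X_i ^+ e i)) -> ~ J 'X_[m] -> (mdeg m <= \sum_i e i)%N.
Proof.
move=> HJ Je Jm; rewrite mdegE leq_sum // => i _; apply: ltnW; rewrite ltnNge.
apply/negP => le_em; apply: Jm.
have le_Um : (U_(i) *+ e i <= m)%MM.
  apply/mnm_lepP => j; rewrite mulmnE mnm1E.
  by case: eqP => [<- | _]; rewrite ?mul1n ?mul0n.
by rewrite -(submK le_Um) mpolyXD -mpolyXn; apply: idealMl.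
Qed.

(* A monomial outside J that is not in the socle has a multiple x_i x^m outside J,
   and degrees outside J are bounded, so climbing from 1 must stop. *)
Lemma exists_socle_monomial J (e : 'I_t -> nat) : is_ideal J -> ~ J 1 ->
  (forall i, J ('X_i ^+ e i)) -> exists m, socle_monomial J m.
Proof.
move=> HJ J1 Je; set B := (\sum_i e i)%N.
suff climb d m : ~ J 'X_[m] -> (B - mdeg m <= d)%N -> exists m, socle_monomial J m.
  by apply: (climb B 0%MM); rewrite ?mpolyX0 ?leq_subr.
elim: d m => [|d IHd] m Jm le_Bm;
  (have [socle_m | /not_all_ex_not [i]] := classic (forall i, J ('X_i * 'X_[m]));
     first by exists m);
  rewrite -mpolyXD => Jim; have := mdeg_le_notin HJ Je Jim;
  rewrite mdegD mdeg1 -/B => le_imB.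
- lia.
- by apply: (IHd _ Jim); rewrite mdegD mdeg1; lia.
Qed.

Lemma colon_socle_monomial J m : is_ideal J -> socle_monomial J m ->
  forall g, colon J 'X_[m] g <-> max_ideal g.
Proof.
move=> HJ [Jm JXm].
have colon_max g : max_ideal g -> colon J 'X_[m] g.
  by apply: gen_ideal_least => [|_ [i ->]]; [apply: colon_is_ideal | apply: JXm].
move=> g; split=> [Jg | ]; last exact: colon_max.
apply/max_idealE/eqP/negPn/negP => c_nz; apply: Jm; set c := g@_0 in c_nz.
have Jc : J (c%:MP * 'X_[m]).
  have -> : c%:MP * 'X_[m] = g * 'X_[m] - (g - c%:MP) * 'X_[m].
    by rewrite mulrBl opprB addrC addrNK.
  apply: idealB => //; apply: colon_max; apply/max_idealE.
  by rewrite mcoeffB mcoeffC eqxx mulr1 subrr.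
have -> : 'X_[m] = c^-1 *: (c%:MP * 'X_[m]) :> S.
  by rewrite mul_mpolyC scalerA mulVf // scale1r.
exact: idealZ.
Qed.

Lemma vnum_set_socle J m : is_ideal J -> socle_monomial J m -> vnum_set J (mdeg m).
Proof.
move=> HJ socle_m; have colon_m := colon_socle_monomial HJ socle_m.
exists 'X_[m], (@max_ideal K t); split=> //; first by rewrite dhomogX.
by split; [apply: max_ideal_prime | exists 'X_[m]].
Qed.

Lemma vnum_set_ge J n k (i : 'I_t) (e : nat) : is_ideal J ->
  (forall f, J f -> deg_geq n f) -> J ('X_i ^+ e) -> vnum_set J k -> (n <= k.+1)%N.
Proof.
move=> HJ Jdeg Je [f [P [f_homog [Pprime _] colonP]]].
have JP g : J g -> P g by move=> Jg; apply/colonP; apply: idealMr.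
have JXf : J ('X_i * f) by apply/colonP; apply: prime_ideal_pow (JP _ Je).
have f_nz : f != 0.
  apply/eqP => f0; case: Pprime => _ P1 _; apply: P1.
  by apply/colonP; rewrite /colon f0 mulr0; case: HJ.
have Xi_nz : ('X_i : S) != 0.
  apply/eqP => /(congr1 (mcoeff U_(i))) /eqP.
  by rewrite mcoeffX eqxx mcoeff0 oner_eq0.
have Xf_nz : 'X_i * f != 0 by rewrite mulf_neq0.
have Xf_homog : 'X_i * f \is (1 + k).-homog by apply: dhomogM; rewrite ?dhomogX /= ?mdeg1.
have lead_Xf := mlead_supp Xf_nz.
by have := Jdeg _ JXf _ lead_Xf; rewrite (dhomog_mf Xf_homog lead_Xf) add1n.
Qed.

Lemma vnum_predP J k : reflect (vnum_set J k) (vnum_pred J k).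
Proof. by rewrite /vnum_pred; case: excluded_middle_informative; constructor. Qed.

Lemma vnumber_le J k : vnum_set J k -> (vnumber J <= k)%N.
Proof.
move=> /vnum_predP Jk; rewrite /vnumber; case: excluded_middle_informative => [ex | []].
  by case: ex_minnP => m _; apply.
by exists k.
Qed.

Lemma vnumber_ge J b : (exists k, vnum_set J k) ->
  (forall k, vnum_set J k -> (b <= k)%N) -> (b <= vnumber J)%N.
Proof.
move=> [k /vnum_predP Jk] Jb; rewrite /vnumber.
case: excluded_middle_informative => [ex | []].
  by case: ex_minnP => m /vnum_predP /Jb.
by exists k.
Qed.

End Ideals.

Theorem proposition4p5 (K : fieldType) (t : nat) (I : ideal_of K t) :
  monomial_ideal I -> m_primary I ->
  exists s0 : nat, forall s : nat, (s0 <= s)%N ->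
    (vnumber I <= vnumber (pow_ideal I s.+1))%N.
Proof.
move=> _ Iprim; have HI := Iprim.1.
have [e Ie] := m_primary_pure_powers Iprim.
have Ideg := m_primary_deg_geq1 Iprim.
have [m socle_m] := exists_socle_monomial HI (deg_geq_proper Ideg) Ie.
have vI := vnumber_le (vnum_set_socle HI socle_m).
exists (mdeg m) => s le_ms; have [t0 | t_gt0] := posnP t.
  by subst t; move: vI; rewrite nvar0_mnmE mdeg0 leqn0 => /eqP ->.
apply: leq_trans vI (leq_trans le_ms _).
set J := pow_ideal I s.+1.
have HJ : is_ideal J by apply: pow_ideal_is_ideal.
have Jdeg : forall f, J f -> deg_geq s.+1 f by apply: pow_ideal_deg_geq.
have Je := pow_ideal_pure_powers Ie s.+1.
have [mJ socle_mJ] := exists_socle_monomial HJ (deg_geq_proper Jdeg) Je.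
apply: vnumber_ge => [|k]; first by exists (mdeg mJ); apply: vnum_set_socle.
move=> Jk; have := vnum_set_ge HJ Jdeg (Je (Ordinal t_gt0)) Jk.
by rewrite ltnS.
Qed.
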